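(* Let $x\in\mathbb{R}^n$. Then: (a) $T_L\subseteq T_z$; (b) $P_{T_L^\perp}LP_{T_x}=0$, $P_{T_L}LP_{T_x^\perp}=0$, and $P_{T_L^\perp}L=LP_{T_x^\perp}$; (c) for all $x'\in\mathbb{R}^n$, $P_{T_z}LP_{T_x}x'=LP_{T_x}x'$, and $P_{T_z^\perp}LP_{T_x}=0$; (d) for all $u\in\mathbb{R}^p$, $P_{T_x}L^\top P_{T_L}u=P_{T_x}L^\top u$ and $P_{T_x}L^\top P_{T_z}u=P_{T_x}L^\top u$; (e) $L^\top P_{T_z}L$ is diagonal with $(L^\top P_{T_z}L)_{i,i}=\sum_{t\in\mathcal{I}_x,\ i\in G_t}w_t^2$ for $i=1,\dots,n$.
   Context: Let $n,N\in\mathbb{N}$, let $G_1,\dots,G_N\subseteq\{1,\dots,n\}$ be nonempty groups, possibly overlapping, with $\bigcup_iG_i=\{1,\dots,n\}$, and weights $w_i>0$. $x_G$ is the subvector of $x$ indexed by $G$ (increasing order). Let $p=\sum_i|G_i|$, partition $\{1,\dots,p\}$ into consecutive blocks $J_i=\{\sum_{j<i}|G_j|+1,\dots,\sum_{j\le i}|G_j|\}$, and define $L\in\mathbb{R}^{p\times n}$ by $(Lx)_{J_i}=w_ix_{G_i}$. For $x\in\mathbb{R}^n$: $\mathcal{I}_x=\{t:x_{G_t}\ne0\}$; $\mathcal{E}_x=\{1,\dots,n\}\setminus\bigcup_{t\notin\mathcal{I}_x}G_t$, $T_x=\{x'\in\mathbb{R}^n:\mathrm{supp}(x')\subseteq\mathcal{E}_x\}$;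 $\mathcal{E}_z=\bigcup_{t\in\mathcal{I}_x}J_t$, $T_z=\{z'\in\mathbb{R}^p:\mathrm{supp}(z')\subseteq\mathcal{E}_z\}$; $\mathcal{E}_L=\mathrm{supp}(LP_{T_x}\mathbf{1}_n)\subseteq\{1,\dots,p\}$ (with $\mathbf{1}_n$ the all-ones vector), $T_L=\{z'\in\mathbb{R}^p:\mathrm{supp}(z')\subseteq\mathcal{E}_L\}$. $P_T$ denotes the orthogonal (coordinate) projection onto the coordinate subspace $T$ and $T^\perp$ its orthogonal complement. *)

From mathcomp Require Import all_boot all_order all_algebra.
Set Implicit Arguments. Unset Strict Implicit. Unset Printing Implicit Defensive.
Import Order.TTheory GRing.Theory Num.Theory.
Local Open Scope ring_scope.

Section GroupL.
Variables (R : realFieldType) (n N : nat) (G : 'I_N -> {set 'I_n}) (w : 'I_N -> R).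

Definition pdim : nat := (\sum_(t < N) #|G t|)%N.

Definition offs (t : 'I_N) : nat := (\sum_(s < N | (s < t)%N) #|G s|)%N.

Definition Jblk (t : 'I_N) : {set 'I_pdim} :=
  [set k : 'I_pdim | (offs t <= k < offs t + #|G t|)%N].

Definition gseq (t : 'I_N) : seq nat := map val (enum (G t)).

(* L : (L x)_{J_t} = w_t x_{G_t}: row (offs t + j) picks the j-th element of G_t *)
Definition Lmx : 'M[R]_(pdim, n) :=
  \matrix_(k < pdim, l < n)
    \sum_(t < N) (if (k \in Jblk t) && (val l == nth 0%N (gseq t) (k - offs t))
                  then w t else 0).

Definition Pset (m : nat) (S : {set 'I_m}) : 'M[R]_m :=
  diag_mx (\row_(i < m) (i \in S)%:R).

Definition inT (m : nat) (S : {set 'I_m}) (z : 'cV[R]_m) : Prop :=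
  forall k, k \notin S -> z k 0 = 0.

Definition Ix (x : 'cV[R]_n) : {set 'I_N} :=
  [set t | [exists i in G t, x i 0 != 0]].

Definition Ex (x : 'cV[R]_n) : {set 'I_n} :=
  ~: (\bigcup_(t | t \notin Ix x) G t).

Definition Ez (x : 'cV[R]_n) : {set 'I_pdim} :=
  \bigcup_(t in Ix x) Jblk t.

Definition EL (x : 'cV[R]_n) : {set 'I_pdim} :=
  [set k | (Lmx *m Pset (Ex x) *m (const_mx 1 : 'cV[R]_n)) k 0 != 0].

End GroupL.

(* Each row k of L lies in exactly one block J_t and selects one coordinate a
   of G_t, so that L_{k,l} = w_t [l = a].  Hence k is in E_L iff a is in E_x,
   k is in E_z iff t is in I_x, and a in E_x forces t in I_x, for otherwise G_t
   would lie outside E_x.  A coordinate projection passes through L as soon as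
   row and column memberships agree wherever L is nonzero; with symmetry and
   idempotence of the projections this gives (a)-(d).  For (e), the rows
   selecting the coordinate i are in bijection with the groups containing i. *)

From mathcomp Require Import all_boot all_order all_algebra.
Set Implicit Arguments. Unset Strict Implicit. Unset Printing Implicit Defensive.
Import Order.TTheory GRing.Theory Num.Theory.
Local Open Scope ring_scope.

Section CoordinateProjection.
Variable R : realFieldType.

Lemma Pset_mulmxE m p (S : {set 'I_m}) (A : 'M[R]_(m, p)) i j :
  (Pset R S *m A) i j = (i \in S)%:R * A i j.
Proof. by rewrite mul_diag_mx !mxE. Qed.

Lemma mulmx_PsetE m p (S : {set 'I_p}) (A : 'M[R]_(m, p)) i j :
  (A *m Pset R S) i j = A i j * (j \in S)%:R.
Proof. by rewrite mul_mx_diag !mxE. Qed.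

Lemma tr_Pset m (S : {set 'I_m}) : (Pset R S)^T = Pset R S.
Proof. exact: tr_diag_mx. Qed.

Lemma Pset_mul m (S T : {set 'I_m}) : Pset R S *m Pset R T = Pset R (S :&: T).
Proof.
apply/matrixP => i j; rewrite Pset_mulmxE !mxE inE.
case: eqP => [->|_]; last by rewrite !mulr0n mulr0.
by rewrite !mulr1n; case: (j \in S); rewrite ?mul1r ?mul0r.
Qed.

Lemma Pset0 m : Pset R (set0 : {set 'I_m}) = 0.
Proof. by apply/matrixP => i j; rewrite !mxE inE mul0rn. Qed.

Lemma Pset_mulCl m (S : {set 'I_m}) : Pset R (~: S) *m Pset R S = 0.
Proof. by rewrite Pset_mul setIC setICr Pset0. Qed.

Lemma Pset_mulCr m (S : {set 'I_m}) : Pset R S *m Pset R (~: S) = 0.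
Proof. by rewrite Pset_mul setICr Pset0. Qed.

Lemma Pset_idem m (S : {set 'I_m}) : Pset R S *m Pset R S = Pset R S.
Proof. by rewrite Pset_mul setIid. Qed.

Lemma Pset_mulmx_id m p (S : {set 'I_m}) (A : 'M[R]_(m, p)) :
  (forall i j, A i j != 0 -> i \in S) -> Pset R S *m A = A.
Proof.
move=> suppA; apply/matrixP => i j; rewrite Pset_mulmxE.
by have [->|/suppA ->] := eqVneq (A i j) 0; rewrite ?mul1r ?mulr0.
Qed.

Lemma Pset_mulmxC m p (S : {set 'I_m}) (T : {set 'I_p}) (A : 'M[R]_(m, p)) :
  (forall i j, A i j != 0 -> (i \in S) = (j \in T)) ->
  Pset R S *m A = A *m Pset R T.
Proof.
move=> suppA; apply/matrixP => i j; rewrite Pset_mulmxE mulmx_PsetE.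
by have [->|/suppA ->] := eqVneq (A i j) 0; rewrite ?mulr0 ?mul0r // mulrC.
Qed.

Lemma inT_subset m (S T : {set 'I_m}) (z : 'cV[R]_m) :
  S \subset T -> inT S z -> inT T z.
Proof. by move=> /subsetP sST zS k kT; apply: zS; apply: contra kT; apply: sST. Qed.

End CoordinateProjection.

Lemma filter_enum_ord_lt N (t : nat) :
  [seq s : 'I_N <- enum 'I_N | (s < t)%N] = take t (enum 'I_N).
Proof.
apply: (inj_map val_inj).
rewrite map_take val_enum_ord take_iota.
rewrite -(filter_map val (fun i => (i < t)%N)) val_enum_ord.
have [tN|Nt] := leqP t N.
  rewrite -(subnKC tN) iotaD filter_cat add0n.
  rewrite (eq_in_filter (a2 := predT)) ?filter_predT; last by move=> i; rewrite mem_iota.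
  rewrite (eq_in_filter (a2 := pred0)) ?filter_pred0 ?cats0 //.
  by move=> i; rewrite mem_iota /= => /andP[/leq_gtF].
rewrite (eq_in_filter (a2 := predT)) ?filter_predT //.
by move=> i; rewrite mem_iota => /andP[_ /leq_trans]; apply; apply: ltnW.
Qed.

Section Blocks.
Variables (R : realFieldType) (n N : nat) (G : 'I_N -> {set 'I_n}) (w : 'I_N -> R).

Implicit Types (k : 'I_(pdim G)) (t : 'I_N).

Definition block_sizes : seq nat := [seq #|G t| | t <- enum 'I_N].

Lemma size_block_sizes : size block_sizes = N.
Proof. by rewrite size_map size_enum_ord. Qed.

Lemma nth_block_sizes (t : 'I_N) : nth 0 block_sizes t = #|G t|.
Proof. by rewrite (nth_map t) ?nth_ord_enum // size_enum_ord. Qed.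

Lemma pdimE : pdim G = sumn block_sizes.
Proof. by rewrite /pdim sumnE big_map big_enum. Qed.

Lemma offsE (t : 'I_N) : offs G t = sumn (take t block_sizes).
Proof.
by rewrite /offs -map_take sumnE big_map -filter_enum_ord_lt big_filter big_enum_cond.
Qed.

Lemma row_group_subproof k : (reshape_index block_sizes k < N)%N.
Proof. by rewrite -[X in (_ < X)%N]size_block_sizes reshape_indexP // -pdimE. Qed.

Definition row_group k : 'I_N := Ordinal (row_group_subproof k).

Lemma row_offsetE k : reshape_offset block_sizes k = (k - offs G (row_group k))%N.
Proof. by rewrite offsE. Qed.

Lemma row_offset_subproof k : (reshape_offset block_sizes k < #|G (row_group k)|)%N.
Proof. by rewrite -nth_block_sizes reshape_offsetP // -pdimE. Qed.

Definition row_coord k : 'I_n := enum_val (Ordinal (row_offset_subproof k)).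

Lemma row_coord_in k : row_coord k \in G (row_group k).
Proof. exact: enum_valP. Qed.

Lemma mem_Jblk k t : (k \in Jblk G t) = (row_group k == t).
Proof.
apply/idP/eqP => [|<-]; last first.
  rewrite inE -{1 2}(reshape_indexK block_sizes k) /flatten_index.
  by rewrite offsE /= leq_addr ltn_add2l -nth_block_sizes reshape_offsetP // -pdimE.
rewrite inE offsE => /andP[le_o_k lt_k]; apply: val_inj => /=.
rewrite -(subnKC le_o_k) -/(flatten_index _ t _) flatten_indexKl //.
by rewrite nth_block_sizes ltn_subLR // offsE.
Qed.

Lemma nth_gseq t (j : 'I_#|G t|) : nth 0%N (gseq G t) j = enum_val j.
Proof.
rewrite /gseq (nth_map (enum_val j)) -?cardE //.
by rewrite /enum_val (set_nth_default (enum_default j)) // -cardE.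
Qed.

Lemma LmxE k l : Lmx G w k l = if l == row_coord k then w (row_group k) else 0.
Proof.
rewrite mxE (bigD1 (row_group k)) //= mem_Jblk eqxx big1 ?addr0; last first.
  by move=> t; rewrite mem_Jblk eq_sym => /negbTE ->.
by rewrite -row_offsetE (nth_gseq (Ordinal (row_offset_subproof k))) (inj_eq val_inj).
Qed.

Lemma index_row_coord k :
  index (row_coord k) (enum (G (row_group k))) = (k - offs G (row_group k))%N.
Proof.
rewrite -row_offsetE /row_coord /enum_val index_uniq ?enum_uniq //.
by rewrite -cardE row_offset_subproof.
Qed.

Lemma offs_le_row k : (offs G (row_group k) <= k)%N.
Proof. by move: (mem_Jblk k (row_group k)); rewrite eqxx inE => /andP[]. Qed.

Lemma row_coord_inj t : {in [set k | row_group k == t] &, injective row_coord}.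
Proof.
move=> k1 k2; rewrite !inE => /eqP g1 /eqP g2 eq12; apply: val_inj => /=.
rewrite -(subnKC (offs_le_row k1)) -(subnKC (offs_le_row k2)) -!index_row_coord.
by rewrite g1 g2 eq12.
Qed.

Lemma row_coord_onto t : row_coord @: [set k | row_group k == t] = G t.
Proof.
apply/setP => i; apply/imsetP/idP => [[k /[!inE] /eqP <- ->]|iG].
  exact: row_coord_in.
have lt_j : (index i (enum (G t)) < #|G t|)%N by rewrite cardE index_mem mem_enum.
have lt_k : (offs G t + index i (enum (G t)) < pdim G)%N.
  by rewrite pdimE offsE; apply: flatten_indexP; rewrite nth_block_sizes.
have kt : row_group (Ordinal lt_k) = t.
  by apply/eqP; rewrite -mem_Jblk inE leq_addr ltn_add2l.
have kG : row_coord (Ordinal lt_k) \in G t.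
  by have := row_coord_in (Ordinal lt_k); rewrite kt.
exists (Ordinal lt_k); first by rewrite inE kt.
have := index_row_coord (Ordinal lt_k); rewrite kt /= addKn.
by move/esym; apply: (index_inj i); rewrite mem_enum.
Qed.

Lemma sum_rows (F : 'I_N -> 'I_n -> R) :
  \sum_k F (row_group k) (row_coord k) = \sum_t \sum_(i in G t) F t i.
Proof.
rewrite (partition_big row_group xpredT) //=; apply: eq_bigr => t _.
rewrite -row_coord_onto big_imset; last exact: row_coord_inj.
by apply: eq_big => k; rewrite ?inE // => /eqP ->.
Qed.

End Blocks.

Section Supports.
Variables (R : realFieldType) (n N : nat) (G : 'I_N -> {set 'I_n}) (w : 'I_N -> R).
Variable x : 'cV[R]_n.
Implicit Types (k : 'I_(pdim G)) (t : 'I_N) (i : 'I_n).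

Lemma mem_Ez k : (k \in Ez G x) = (row_group k \in Ix G x).
Proof.
apply/bigcupP/idP => [[t tI] /[!mem_Jblk] /eqP -> //|kI].
by exists (row_group k); rewrite // mem_Jblk.
Qed.

Lemma Ix_of_Ex t i : i \in G t -> i \in Ex G x -> t \in Ix G x.
Proof.
by move=> iG; apply: contraLR => tI; rewrite in_setC negbK; apply/bigcupP; exists t.
Qed.

Lemma Lmx_neq0 k l : Lmx G w k l != 0 -> l = row_coord k.
Proof. by rewrite LmxE; case: (l =P row_coord k) => // _; rewrite eqxx. Qed.

Lemma Pset_Ez_Lmx_Ex :
  Pset R (Ez G x) *m (Lmx G w *m Pset R (Ex G x)) = Lmx G w *m Pset R (Ex G x).
Proof.
apply: Pset_mulmx_id => k l; rewrite mulmx_PsetE mulf_eq0 negb_or.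
case/andP=> /Lmx_neq0 ->; rewrite pnatr_eq0 eqb0 negbK mem_Ez.
exact: Ix_of_Ex (row_coord_in _).
Qed.

Lemma Lmx_gramE (S : {set 'I_(pdim G)}) i j :
  ((Lmx G w)^T *m Pset R S *m Lmx G w) i j
    = (i == j)%:R * \sum_(k in S | row_coord k == i) w (row_group k) ^+ 2.
Proof.
rewrite mxE mulr_sumr [RHS]big_mkcond /=; apply: eq_bigr => k _.
rewrite mulmx_PsetE mxE !LmxE [i == _]eq_sym [j == _]eq_sym.
case: (k \in S); case: (row_coord k =P i) => [<-|_]; rewrite ?mulr0 ?mul0r //=.
by case: eqP; rewrite ?mulr1 ?mul1r ?mulr0 ?mul0r ?expr2.
Qed.

Lemma sum_Ez_rows i :
  \sum_(k in Ez G x | row_coord k == i) w (row_group k) ^+ 2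
    = \sum_(t in Ix G x | i \in G t) w t ^+ 2.
Proof.
pose F t j := if (t \in Ix G x) && (j == i) then w t ^+ 2 else 0.
rewrite big_mkcond (eq_bigr (fun k => F (row_group k) (row_coord k))); last first.
  by move=> k _; rewrite /F mem_Ez.
rewrite sum_rows [RHS]big_mkcond; apply: eq_bigr => t _; rewrite /F.
case: (t \in Ix G x) => /=; last by rewrite big1.
rewrite -big_mkcondr; have [iG|niG] := boolP (i \in G t).
  by rewrite (big_pred1 i) // => j /=; case: eqP => [->|]; rewrite ?iG ?andbF.
by rewrite big1 // => j /andP[jG /eqP eq_ji]; rewrite -eq_ji jG in niG.
Qed.

Section PositiveWeights.
Hypothesis w_gt0 : forall t, 0 < w t.

Lemma mem_EL k : (k \in EL G w x) = (row_coord k \in Ex G x).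
Proof.
rewrite inE -mulmxA mxE (bigD1 (row_coord k)) //= big1 ?addr0 => [|l ne_l]; last first.
  by rewrite LmxE (negbTE ne_l) mul0r.
rewrite LmxE eqxx Pset_mulmxE mxE mulr1 mulf_eq0 negb_or gt_eqF //=.
by rewrite pnatr_eq0 eqb0 negbK.
Qed.

Lemma EL_subset_Ez : EL G w x \subset Ez G x.
Proof.
by apply/subsetP => k; rewrite mem_EL mem_Ez; apply: Ix_of_Ex (row_coord_in _).
Qed.

Lemma Pset_EL_Lmx : Pset R (EL G w x) *m Lmx G w = Lmx G w *m Pset R (Ex G x).
Proof. by apply: Pset_mulmxC => k l /Lmx_neq0 ->; rewrite mem_EL. Qed.

Lemma Pset_ELC_Lmx :
  Pset R (~: EL G w x) *m Lmx G w = Lmx G w *m Pset R (~: Ex G x).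
Proof.
by apply: Pset_mulmxC => k l /Lmx_neq0 ->; rewrite in_setC mem_EL -in_setC.
Qed.

End PositiveWeights.
End Supports.

Theorem lemmaA2 (R : realFieldType) (n N : nat) (G : 'I_N -> {set 'I_n})
  (w : 'I_N -> R)
  (HGne : forall t, G t != set0)
  (Hcover : \bigcup_(t < N) G t = [set: 'I_n])
  (Hw : forall t, 0 < w t)
  (x : 'cV[R]_n) :
  let L := Lmx G w in
  let PTx := Pset R (Ex G x) in
  let PTxp := Pset R (~: Ex G x) in
  let PTz := Pset R (Ez G x) in
  let PTzp := Pset R (~: Ez G x) in
  let PTL := Pset R (EL G w x) in
  let PTLp := Pset R (~: EL G w x) in
  (* (a) *)
  (forall z : 'cV[R]_(pdim G), inT (EL G w x) z -> inT (Ez G x) z) /\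
  (* (b) *)
  (PTLp *m L *m PTx = 0 /\ PTL *m L *m PTxp = 0 /\ PTLp *m L = L *m PTxp) /\
  (* (c) *)
  ((forall x' : 'cV[R]_n, PTz *m L *m PTx *m x' = L *m PTx *m x') /\
   PTzp *m L *m PTx = 0) /\
  (* (d) *)
  (forall u : 'cV[R]_(pdim G),
     PTx *m L^T *m PTL *m u = PTx *m L^T *m u /\
     PTx *m L^T *m PTz *m u = PTx *m L^T *m u) /\
  (* (e) *)
  (is_diag_mx (L^T *m PTz *m L) /\
   forall i : 'I_n,
     (L^T *m PTz *m L) i i = \sum_(t in Ix G x | i \in G t) w t ^+ 2).
Proof.
move=> L PTx PTxp PTz PTzp PTL PTLp.
have PTL_L : PTL *m L = L *m PTx := Pset_EL_Lmx G x Hw.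
have PTLp_L : PTLp *m L = L *m PTxp := Pset_ELC_Lmx G x Hw.
have PTz_L_PTx : PTz *m (L *m PTx) = L *m PTx := Pset_Ez_Lmx_Ex G w x.
split; first by move=> z; apply: inT_subset (EL_subset_Ez G x Hw).
split.
  split; last split => //.
  - by rewrite PTLp_L -mulmxA Pset_mulCl mulmx0.
  - by rewrite PTL_L -mulmxA Pset_mulCr mulmx0.
split.
  split.
  - by move=> x'; rewrite -(mulmxA PTz) PTz_L_PTx.
  - by rewrite -(mulmxA PTzp) -PTz_L_PTx mulmxA Pset_mulCl mul0mx.
split=> [u|].
  have PTL_L_PTx : PTL *m (L *m PTx) = L *m PTx.
    by rewrite mulmxA PTL_L -mulmxA Pset_idem.
  by split; congr (_ *m u); apply: trmx_inj; rewrite !trmx_mul !tr_Pset trmxK.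
rewrite /L /PTz; split => [|i]; last by rewrite Lmx_gramE eqxx mul1r sum_Ez_rows.
apply/is_diag_mxP => i j ne_ij.
by rewrite Lmx_gramE -(inj_eq val_inj) (negbTE ne_ij) mul0r.
Qed.
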